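(* Fix a set $A$, a set $V(A)$ of ''objects'', a binary relation $\trianglelefteq$ on objects, and a binary relation $\sqsubset$ on objects (with reflexive closure $\sqsubseteq$) satisfying: (i) if $x \trianglelefteq y$ and $y \sqsubset z$ then $x \trianglelefteq z$; (ii) $\sqsubset$ is well-founded on $V(A)$, i.e., there is no sequence $f$ with $f(i)\in V(A)$ and $f(i+1)\sqsubset f(i)$ for all $i$; (iii) $\sqsubset$ is transitive; (iv) if $x \sqsubset y$ and $y \in V(A)$ then $x \in V(A)$. Let $f:\mathbb{N}\to$ objects and $n\in\mathbb{N}$ be such that $f(n+1)\in V(A)$, $f$ is minimal at $n$, and $f$ is bad w.r.t. $\trianglelefteq$. Then there exists a sequence $g$ such that: $g(i)=f(i)$ for all $i\le n$; $g(n+1)\sqsubseteq f(n+1)$; for every $i\ge n+1$ there is $j\ge n+1$ with $g(i)\sqsubseteq f(j)$; the spliced sequence $f\,[n+1]\,g$ is bad w.r.t. $\trianglelefteq$; and $f\,[n+1]\,g$ is minimal at $n+1$.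
   Context: Sequences are functions $\mathbb{N}\to$ objects. A sequence $h$ is good w.r.t. $\trianglelefteq$ if there are $i<j$ with $h(i)\trianglelefteq h(j)$, and bad otherwise. For sequences $f,g$ and $n\in\mathbb{N}$, the splice $f\,[n]\,g$ is the sequence $j\mapsto g(j)$ if $n\le j$ and $j\mapsto f(j)$ otherwise. A sequence $f$ is minimal at $n$ if for every sequence $g$ such that $g(i)=f(i)$ for all $i<n$, $g(n)\sqsubset f(n)$, and for every $i\ge n$ there exists $j\ge n$ with $g(i)\sqsubseteq f(j)$, the sequence $g$ is good w.r.t. $\trianglelefteq$. *)

From Stdlib Require Import Arith.

Section Defs.
Context {Obj : Type}.

Definition reflc (R : Obj -> Obj -> Prop) (x y : Obj) : Prop := R x y \/ x = y.

Definition good (le : Obj -> Obj -> Prop) (h : nat -> Obj) : Prop :=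
  exists i j, i < j /\ le (h i) (h j).

Definition bad (le : Obj -> Obj -> Prop) (h : nat -> Obj) : Prop :=
  ~ good le h.

Definition splice (f : nat -> Obj) (n : nat) (g : nat -> Obj) : nat -> Obj :=
  fun j => if Nat.leb n j then g j else f j.

Definition minimal_at (le lt : Obj -> Obj -> Prop) (f : nat -> Obj) (n : nat) : Prop :=
  forall g : nat -> Obj,
    (forall i, i < n -> g i = f i) ->
    lt (g n) (f n) ->
    (forall i, n <= i -> exists j, n <= j /\ reflc lt (g i) (f j)) ->
    good le g.
End Defs.

(** Among all bad sequences that agree with [f] below [S n], stay below [f]
    from [S n] on, and start at [S n] below [f (S n)], pick one whose term at
    [S n] is [lt]-minimal; this is possible because [lt] is well-founded on
    [VA] and [f (S n)] lies in [VA].  Such a sequence already agrees with [f]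
    below [S n], so it equals its own splice, and any bad sequence witnessing
    the failure of minimality at [S n] would again be such a candidate with a
    smaller term at [S n]. *)
From Stdlib Require Import Arith Lia Classical ClassicalEpsilon FunctionalExtensionality.

Lemma exists_minimal {Obj : Type} (VA : Obj -> Prop) (lt : Obj -> Obj -> Prop)
  (no_descent : ~ exists f : nat -> Obj, forall i, VA (f i) /\ lt (f (S i)) (f i))
  (P : Obj -> Prop) (x0 : Obj) :
  P x0 -> (forall x, P x -> VA x) -> exists m, P m /\ forall y, lt y m -> ~ P y.
Proof.
  intros Px0 PVA; apply NNPP; intros no_min.
  assert (descend : forall x : {x | P x}, {y : {y | P y} | lt (proj1_sig y) (proj1_sig x)}).
  { intros [x Px]; apply constructive_indefinite_description.
    apply NNPP; intros no_below; apply no_min; exists x; split; [exact Px|].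
    intros y lt_yx Py; apply no_below; exists (exist P y Py); exact lt_yx. }
  set (chain := fix chain k :=
         match k with 0 => exist P x0 Px0 | S k => proj1_sig (descend (chain k)) end).
  apply no_descent; exists (fun k => proj1_sig (chain k)); intros i; split.
  - apply PVA, proj2_sig.
  - exact (proj2_sig (descend (chain i))).
Qed.

Section Descendants.
Context {Obj : Type} (le lt : Obj -> Obj -> Prop).
Hypothesis lt_trans : forall x y z, lt x y -> lt y z -> lt x z.

Lemma reflc_trans (x y z : Obj) : reflc lt x y -> reflc lt y z -> reflc lt x z.
Proof. intros [xy|<-] [yz|<-]; unfold reflc; eauto. Qed.

Definition dominated_from (m : nat) (g f : nat -> Obj) : Prop :=
  forall i, m <= i -> exists j, m <= j /\ reflc lt (g i) (f j).

Lemma dominated_from_refl (m : nat) (f : nat -> Obj) : dominated_from m f f.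
Proof. intros i le_mi; exists i; split; [exact le_mi | now right]. Qed.

Lemma dominated_from_trans (m : nat) (h g f : nat -> Obj) :
  dominated_from m h g -> dominated_from m g f -> dominated_from m h f.
Proof.
  intros hg gf i le_mi.
  destruct (hg i le_mi) as [j [le_mj hj]], (gf j le_mj) as [k [le_mk gk]].
  exists k; split; [exact le_mk | exact (reflc_trans _ _ _ hj gk)].
Qed.

Definition bad_descendant (f : nat -> Obj) (m : nat) (g : nat -> Obj) : Prop :=
  (forall i, i < m -> g i = f i) /\ reflc lt (g m) (f m) /\
  dominated_from m g f /\ bad le g.

Lemma bad_descendant_refl (f : nat -> Obj) (m : nat) : bad le f -> bad_descendant f m f.
Proof. intros bad_f; repeat split; auto using dominated_from_refl; now right. Qed.

Lemma bad_descendant_trans (f g h : nat -> Obj) (m : nat) :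
  bad_descendant f m g ->
  (forall i, i < m -> h i = g i) -> lt (h m) (g m) -> dominated_from m h g -> bad le h ->
  bad_descendant f m h.
Proof.
  intros (gf_below & gf_m & gf_dom & _) hg_below hg_m hg_dom bad_h; repeat split.
  - intros i lt_im; rewrite hg_below, gf_below; auto.
  - exact (reflc_trans _ _ _ (or_introl hg_m) gf_m).
  - exact (dominated_from_trans _ _ _ _ hg_dom gf_dom).
  - exact bad_h.
Qed.

Lemma splice_bad_descendant (f g : nat -> Obj) (m : nat) :
  bad_descendant f m g -> splice f m g = g.
Proof.
  intros [g_below _]; apply functional_extensionality; intros i; unfold splice.
  destruct (Nat.leb m i) eqn:E; [reflexivity|].
  apply Nat.leb_gt in E; symmetry; exact (g_below i E).
Qed.

Lemma minimal_bad_descendant_minimal_at (f g : nat -> Obj) (m : nat) :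
  bad_descendant f m g ->
  (forall h, bad_descendant f m h -> ~ lt (h m) (g m)) ->
  minimal_at le lt g m.
Proof.
  intros desc_g g_min h hg_below hg_m hg_dom; apply NNPP; intros bad_h.
  exact (g_min h (bad_descendant_trans f g h m desc_g hg_below hg_m hg_dom bad_h) hg_m).
Qed.

End Descendants.

Theorem lemma4 (Obj : Type) (VA : Obj -> Prop)
  (le lt : Obj -> Obj -> Prop)
  (H_i : forall x y z, le x y -> lt y z -> le x z)
  (H_ii : ~ exists f : nat -> Obj, forall i, VA (f i) /\ lt (f (S i)) (f i))
  (H_iii : forall x y z, lt x y -> lt y z -> lt x z)
  (H_iv : forall x y, lt x y -> VA y -> VA x)
  (f : nat -> Obj) (n : nat)
  (Hfn : VA (f (S n)))
  (Hmin : minimal_at le lt f n)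
  (Hbad : bad le f) :
  exists g : nat -> Obj,
    (forall i, i <= n -> g i = f i) /\
    reflc lt (g (S n)) (f (S n)) /\
    (forall i, S n <= i -> exists j, S n <= j /\ reflc lt (g i) (f j)) /\
    bad le (splice f (S n) g) /\
    minimal_at le lt (splice f (S n) g) (S n).
Proof.
  destruct (exists_minimal VA lt H_ii
              (fun x => exists g, bad_descendant le lt f (S n) g /\ g (S n) = x) (f (S n)))
    as [x [[g [desc_g <-]] g_min]].
  - exists f; split; [exact (bad_descendant_refl le lt f (S n) Hbad) | reflexivity].
  - intros x [g [(_ & [lt_gf | ->] & _) <-]]; [exact (H_iv _ _ lt_gf Hfn) | exact Hfn].
  - assert (minimal_g : minimal_at le lt g (S n)).
    { apply (minimal_bad_descendant_minimal_at le lt H_iii f g); [exact desc_g|].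
      intros h desc_h lt_hg; exact (g_min _ lt_hg (ex_intro _ h (conj desc_h eq_refl))). }
    exists g; rewrite (splice_bad_descendant le lt f g (S n) desc_g).
    destruct desc_g as (g_below & g_le & g_dom & bad_g).
    repeat split; auto.
    intros i le_in; apply g_below; lia.
Qed.
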